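(* Let $X$ be a compact metrizable space, $\Delta$ a weak*-closed set of Borel probability measures on $X$, and $\varepsilon>0$. Let $f,g\colon X\to\mathbb R$ be continuous with $\|f-g\|_{2,\Delta}^2<\varepsilon^3/8$ and $\mu(g^{-1}(0))<\varepsilon/2$ for all $\mu\in\Delta$. Then there is a continuous $g'\colon X\to\mathbb R$ such that $\|f-g'\|_\infty<\varepsilon$ and $\mu((g')^{-1}(0))<\varepsilon$ for all $\mu\in\Delta$.
   Context: $\|h\|_{2,\Delta}=\sup\{(\int|h|^2d\mu)^{1/2}:\mu\in\Delta\}$ for $h\in\mathrm{C}(X)$. *)

From HB Require Import structures.
From mathcomp Require Import all_boot all_order all_algebra.
From mathcomp Require Import all_classical all_reals all_analysis.
Set Implicit Arguments. Unset Strict Implicit. Unset Printing Implicit Defensive.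
Import Order.TTheory GRing.Theory Num.Theory.
Import numFieldNormedType.Exports.
Local Open Scope classical_set_scope.
Local Open Scope ring_scope.

Definition borel_space (R : realType) (X : pseudoPMetricType R) :=
  g_sigma_algebraType (@open X).

Definition pint (R : realType) (X : pseudoPMetricType R)
  (mu : probability (borel_space X) R) (h : X -> R) : R :=
  Rintegral mu setT h.

(* A set of Borel probability measures is weak*-closed: its complement is
   open in the weak* topology, whose basic open neighbourhoods of mu are
   { nu | |int h_i dnu - int h_i dmu| < e, i < n } for finitely many
   continuous h_i and e > 0. *)
Definition weak_star_closed (R : realType) (X : pseudoPMetricType R)
  (Delta : set (probability (borel_space X) R)) : Prop :=
  forall mu, ~ Delta mu ->
    exists (n : nat) (hs : 'I_n -> X -> R) (e : R),
      0 < e /\ (forall i, continuous (hs i)) /\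
      forall nu : probability (borel_space X) R,
        (forall i, `| pint nu (hs i) - pint mu (hs i) | < e) -> ~ Delta nu.

Definition norm2Delta_sq (R : realType) (X : pseudoPMetricType R)
  (Delta : set (probability (borel_space X) R)) (h : X -> R) : \bar R :=
  ereal_sup [set (\int[mu]_x ((`|h x| ^+ 2)%:E))%E | mu in Delta].

Definition supnorm (R : realType) (X : pseudoPMetricType R) (h : X -> R) : \bar R :=
  ereal_sup (range (fun x => (`|h x|)%:E)).

From HB Require Import structures.
From mathcomp Require Import all_boot all_order all_algebra.
From mathcomp Require Import all_classical all_reals all_analysis.
From mathcomp Require Import measurable_realfun ring lra.
Import Order.TTheory GRing.Theory Num.Theory.
Import numFieldNormedType.Exports.
Local Open Scope classical_set_scope.
Local Open Scope ring_scope.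

(* Take g' := f - clamp_{eps/2} (f - g).  Then |f - g'| <= eps/2 everywhere,
   and g' = g wherever |f - g| < eps/2, so the zero set of g' lies in the zero
   set of g together with {|f - g| >= eps/2}.  By Chebyshev's inequality,
   (eps/2)^2 mu{|f - g| >= eps/2} <= int |f - g|^2 dmu < (eps/2)^3, so the
   second set has mu-measure below eps/2 for every mu in Delta. *)

Definition clamp {R : realDomainType} (c t : R) := Num.max (- c) (Num.min t c).

Lemma clamp_id {R : realDomainType} (c t : R) : `|t| <= c -> clamp c t = t.
Proof.
by rewrite ler_norml => /andP[Nct tc]; rewrite /clamp minEle maxEle tc Nct.
Qed.

Lemma normr_clamp_le {R : realDomainType} (c t : R) : 0 <= c -> `|clamp c t| <= c.
Proof.
move=> c0; rewrite /clamp minEle maxEle ler_norml.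
case: (leP t c) => tc; first by case: (leP (- c) t) => Nct; apply/andP; split; lra.
by case: (leP (- c) c) => Ncc; apply/andP; split; lra.
Qed.

Lemma continuous_clamp {R : realType} (c : R) : continuous (clamp c).
Proof.
move=> t; apply: (@continuous_max R R (fun=> - c) (fun t => Num.min t c)).
  exact: cst_continuous.
by apply: (@continuous_min R R id (fun=> c)); [exact: cvg_id | exact: cst_continuous].
Qed.

Lemma clamp_correction_zero_sub {T : Type} {R : realDomainType} (c : R)
    (f g : T -> R) :
  (fun x => f x - clamp c (f x - g x)) @^-1` [set 0]
    `<=` g @^-1` [set 0] `|` [set x | c <= `|f x - g x|].
Proof.
move=> x /= g'x0; have [cfg|fgc] := leP c `|f x - g x|; first by right.
by left; move: g'x0; rewrite clamp_id ?(ltW fgc) //; lra.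
Qed.

Lemma continuous_borel_measurable {R : realType} {X : pseudoPMetricType R}
    {h : X -> R} :
  continuous h -> measurable_fun (setT : set (borel_space X)) h.
Proof.
move=> /continuousP hopen.
apply: (measurability _ (RGenOpens.measurableE R)) => _ [_ [a [b ->]] <-].
by rewrite setTI; apply: sub_sigma_algebra; exact/hopen/interval_open.
Qed.

Lemma closed_normr_ge {R : realType} (c : R) : closed [set t : R | c <= `|t|].
Proof.
apply: (@preimage_closed R R (fun t : R => `|t|) [set x | c <= x]) => [t _|].
  exact: norm_continuous.
exact: closed_ge.
Qed.

Lemma measurable_preimage_setT {d d' : measure_display} {T : measurableType d}
    {U : measurableType d'} {h : T -> U} {B : set U} :
  measurable_fun setT h -> measurable B -> measurable (h @^-1` B).
Proof. by move=> mh mB; rewrite -[X in measurable X]setTI; exact: mh. Qed.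

Section Chebyshev.
Context {d : measure_display} {T : measurableType d} {R : realType}.
Variables (mu : measure T R) (h : T -> R).
Hypothesis mh : measurable_fun setT h.

Lemma chebyshev_sq (c : R) : 0 < c ->
  ((c ^+ 2)%:E * mu [set x | (c <= `|h x|)%R] <= \int[mu]_x (`|h x| ^+ 2)%:E)%E.
Proof.
move=> c0.
have mhE : measurable_fun setT (fun x => (h x)%:E) by exact/measurable_EFinP.
have msq : measurable_fun setT (fun e : \bar R => e * e)%E by exact: emeasurable_funM.
have sq_ge0 (e : \bar R) : (0 <= e -> 0 <= e * e)%E by move=> e0; exact: mule_ge0.
have sq_nd : {in `[0%E, +oo[%classic &,
    {homo (fun e : \bar R => e * e)%E : x y / (x <= y)%E}}.
  by move=> x y; rewrite !inE /= !in_itv /= !andbT => x0 y0 xy; exact: lee_pmul.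
have := le_integral_comp_abse mu measurableT msq sq_ge0 sq_nd mhE c0.
rewrite setTI -EFinM -expr2.
by under eq_integral => x _ do rewrite -EFinM -expr2.
Qed.

Lemma measure_abs_ge_lt (c : R) : 0 < c ->
  (\int[mu]_x (`|h x| ^+ 2)%:E < (c ^+ 3)%:E)%E ->
  (mu [set x | (c <= `|h x|)%R] < c%:E)%E.
Proof.
move=> c0 int_lt.
have c20 : 0 < c ^+ 2 by exact: exprn_gt0.
have -> : c%:E = (((c ^+ 2)^-1)%:E * (c ^+ 3)%:E)%E.
  by rewrite -EFinM [c ^+ 3]exprSr mulrA mulVf ?mul1r // gt_eqF.
by rewrite lte_pdivlMl //; exact: le_lt_trans (chebyshev_sq _ c0) int_lt.
Qed.

End Chebyshev.

Lemma integral_le_norm2Delta_sq {R : realType} {X : pseudoPMetricType R}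
    {Delta : set (probability (borel_space X) R)} {mu : probability _ R}
    (h : X -> R) :
  Delta mu -> (\int[mu]_x (`|h x| ^+ 2)%:E <= norm2Delta_sq Delta h)%E.
Proof. by move=> Dmu; apply: ereal_sup_ubound; exists mu. Qed.

Lemma supnorm_le {R : realType} {X : pseudoPMetricType R} (h : X -> R) (c : R) :
  (forall x, `|h x| <= c) -> (supnorm h <= c%:E)%E.
Proof. by move=> hc; apply: ge_ereal_sup => _ [x _ <-]; rewrite lee_fin. Qed.

Theorem lemma2p8 (R : realType) (X : pseudoPMetricType R)
  (hX : hausdorff_space X) (cX : compact [set: X])
  (Delta : set (probability (borel_space X) R))
  (hDelta : weak_star_closed Delta)
  (eps : R) (heps : 0 < eps) (f g : X -> R)
  (cf : continuous f) (cg : continuous g)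
  (hfg : (norm2Delta_sq Delta (fun x => (f x - g x)%R) < (eps ^+ 3 / 8)%R%:E)%E)
  (hg : forall mu, Delta mu -> (mu (g @^-1` [set 0%R]) < (eps / 2)%R%:E)%E) :
  exists g' : X -> R, continuous g' /\
    (supnorm (fun x => (f x - g' x)%R) < eps%:E)%E /\
    (forall mu, Delta mu -> (mu (g' @^-1` [set 0%R]) < eps%:E)%E).
Proof.
set c := eps / 2; have c0 : 0 < c by rewrite /c; lra.
have cfg : continuous (fun x => f x - g x) by move=> x; exact: cvgB (cf x) (cg x).
set g' := fun x => f x - clamp c (f x - g x).
have cg' : continuous g'.
  move=> x; apply: (cvgB (cf x)).
  exact: (continuous_comp (cfg x) (continuous_clamp c _)).
exists g'; split; [exact: cg' | split].
  apply: (@le_lt_trans _ _ c%:E); last by rewrite lte_fin /c; lra.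
  apply: supnorm_le => x; rewrite /g' opprB addrC subrK.
  exact/normr_clamp_le/ltW.
move=> mu Dmu.
have mfg := continuous_borel_measurable cfg.
have far_lt : (mu [set x | (c <= `|f x - g x|)%R] < c%:E)%E.
  apply: (measure_abs_ge_lt _ _ mfg _ c0).
  apply: le_lt_trans (integral_le_norm2Delta_sq _ Dmu) _.
  by have -> : c ^+ 3 = eps ^+ 3 / 8 by rewrite /c; field.
have mfar : measurable ([set x | c <= `|f x - g x|] : set (borel_space X)).
  exact: (measurable_preimage_setT mfg (closed_measurable (closed_normr_ge c))).
have mg0 := measurable_preimage_setT (continuous_borel_measurable cg) (measurable_set1 0).
have mg'0 := measurable_preimage_setT (continuous_borel_measurable cg') (measurable_set1 0).
have zero_set_le : (mu (g' @^-1` [set 0%R]) <=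
    mu (g @^-1` [set 0%R] `|` [set x | (c <= `|f x - g x|)%R]))%E.
  apply: le_measure; rewrite ?inE; last exact: clamp_correction_zero_sub.
    exact: mg'0.
  exact: measurableU.
apply: le_lt_trans zero_set_le _; apply: le_lt_trans (measureU2 mu mg0 mfar) _.
have -> : eps = c + c by rewrite /c; lra.
by rewrite EFinD lteD // hg.
Qed.
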